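(* Let $\mathcal{G}_R$ be the class of all finite reflexive graphs and let $K_n$ be the complete reflexive graph on $n$ vertices. Then the class $\mathrm{Av}(K_n)=\{H\in\mathcal{G}_R: K_n\not\preceq H\}$, with respect to the strong homomorphic image ordering $\preceq$, is well quasi-ordered.
   Context: A reflexive graph is a set with a symmetric edge relation having a loop at every vertex. A homomorphism maps edges to edges; it is strong if additionally every edge of the target between vertices of the image is the image of an edge. Strong homomorphic image ordering: $A\preceq B$ iff there is a surjective strong homomorphism $B\to A$. Well quasi-ordered means no infinite strictly decreasing sequence and no infinite antichain; graphs considered up to isomorphism. *)

From mathcomp Require Import all_boot.
Set Implicit Arguments. Unset Strict Implicit. Unset Printing Implicit Defensive.

(* A finite reflexive graph, with vertex set 'I_n (every finite graph is
   isomorphic to one of these; all notions below are isomorphism-invariant). *)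
Record rgraph := RGraph {
  rg_n : nat;
  rg_e : rel 'I_rg_n;
  rg_refl : reflexive rg_e;
  rg_sym : symmetric rg_e }.

Definition is_hom (B A : rgraph) (f : 'I_(rg_n B) -> 'I_(rg_n A)) : Prop :=
  forall x y, @rg_e B x y -> @rg_e A (f x) (f y).

Definition is_strong_hom (B A : rgraph) (f : 'I_(rg_n B) -> 'I_(rg_n A)) : Prop :=
  @is_hom B A f /\
  forall x y, @rg_e A (f x) (f y) ->
    exists x' y', [/\ f x' = f x, f y' = f y & @rg_e B x' y'].

Definition shi_le (A B : rgraph) : Prop :=
  exists f : 'I_(rg_n B) -> 'I_(rg_n A),
    @is_strong_hom B A f /\ (forall a, exists x, f x = a).

Definition shi_lt (A B : rgraph) : Prop := shi_le A B /\ ~ shi_le B A.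

Definition K (n : nat) : rgraph :=
  @RGraph n (fun _ _ => true) (fun _ => erefl) (fun _ _ => erefl).

Definition wqo_on (C : rgraph -> Prop) : Prop :=
  (~ exists G : nat -> rgraph,
       (forall i, C (G i)) /\ (forall i, shi_lt (G i.+1) (G i))) /\
  (~ exists G : nat -> rgraph,
       (forall i, C (G i)) /\
       (forall i j, i <> j -> ~ shi_le (G i) (G j))).

Definition Av (H0 : rgraph) : rgraph -> Prop := fun H => ~ shi_le H0 H.

From Pilot Require Import Defs.
From Stdlib Require Import Classical ClassicalEpsilon.
From mathcomp Require Import all_boot zify.
Set Implicit Arguments. Unset Strict Implicit. Unset Printing Implicit Defensive.

(* A graph H with K_n ⋠ H has no matching of n^2 edges, since such a matching
   maps onto K_n (send the edge number a*n+b onto the edge ab); so H has a vertex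
   cover of at most 2n^2 vertices.  Label such a cover by 'I_(2n^2).  The other
   vertices are pairwise non-adjacent, so each is determined up to twins by its
   type, the set of labels it is adjacent to.  H is thus described by finite data
   (adjacencies and coincidences among the labels, which types occur) and by the
   number of outer vertices of each type.  If H and H' have the same data and H'
   has at least as many outer vertices of every type, then sending labels to
   labels and the outer vertices of each type of H' onto those of H is a
   surjective strong homomorphism H' -> H.  Dickson's lemma finds such a pair in
   every infinite sequence, so there is no infinite antichain; and a strict
   descent strictly decreases the number of vertices. *)

Lemma exists_min_after (a : nat -> nat) (p : nat) :
  exists q, p < q /\ forall j, p < j -> a q <= a j.
Proof.
suff min_below v : forall q, p < q -> a q <= v ->
    exists q, p < q /\ forall j, p < j -> a q <= a j.
  exact: (min_below (a p.+1) p.+1).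
elim: v => [|v IHv] q lt_pq le_aq.
  by exists q; split=> // j _; move: le_aq; rewrite leqn0 => /eqP ->.
case: (classic (forall j, p < j -> a q <= a j)) => [q_min|]; first by exists q.
move=> /not_all_ex_not [j not_min]; have [lt_pj /negP] := imply_to_and _ _ not_min.
rewrite -ltnNge => lt_ajq.
by apply: (IHv j lt_pj); rewrite -ltnS (leq_trans lt_ajq).
Qed.

Lemma nondecreasing_subseq (a : nat -> nat) : exists phi : nat -> nat,
  (forall i, phi i < phi i.+1) /\ (forall i, a (phi i) <= a (phi i.+1)).
Proof.
pose next_min p := constructive_indefinite_description _ (exists_min_after a p).
pose next p := proj1_sig (next_min p).
have [lt_next next_le] : (forall p, p < next p) /\
    (forall p j, p < j -> a (next p) <= a j).
  by split=> p; case: (proj2_sig (next_min p)).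
exists (fun i => iter i.+1 next 0); split=> i; rewrite [iter i.+2 _ _]iterS.
  exact: lt_next.
by apply: next_le; rewrite iterS; exact: ltn_trans (lt_next _) (lt_next _).
Qed.

Lemma dickson_subseq (X : Type) (I : eqType) (g : X -> I -> nat) (l : seq I)
    (s : nat -> X) : exists phi : nat -> nat,
  (forall i, phi i < phi i.+1) /\
  (forall i, {in l, forall t, g (s (phi i)) t <= g (s (phi i.+1)) t}).
Proof.
elim: l => [|t l [phi [phi_incr phi_le]]]; first by exists id.
have [psi [psi_incr psi_le]] := nondecreasing_subseq (fun k => g (s (phi k)) t).
have phi_homo : {homo phi : i j / i < j} by apply: homo_ltn => //; exact: ltn_trans.
exists (phi \o psi); split=> [i|i u]; first exact: phi_homo.
rewrite inE => /predU1P [->|ul]; first exact: psi_le.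
apply: (homo_leq (f := fun k => g (s (phi k)) u) leqnn leq_trans).
  by move=> k; apply: phi_le.
exact: ltnW.
Qed.

Lemma dickson (X : Type) (I : finType) (g : X -> I -> nat) (s : nat -> X) :
  exists i j, i < j /\ forall t, g (s i) t <= g (s j) t.
Proof.
have [phi [phi_incr phi_le]] := dickson_subseq g (enum I) s.
by exists (phi 0), (phi 1); split=> // t; apply: phi_le; rewrite mem_enum.
Qed.

Lemma dickson_coloured (X : Type) (Col I : finType) (col : X -> Col)
    (g : X -> I -> nat) (s : nat -> X) :
  exists i j, [/\ i < j, col (s i) = col (s j) & forall t, g (s i) t <= g (s j) t].
Proof.
pose g' x (t : I + Col) :=
  match t with inl u => g x u | inr k => nat_of_bool (col x == k) end.
have [i [j [lt_ij le_ij]]] := dickson g' s.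
exists i, j; split=> // [|t]; last exact: (le_ij (inl t)).
by apply/eqP; have := le_ij (inr (col (s i))); rewrite /= eqxx eq_sym; case: eqP.
Qed.

Lemma shi_le_empty (A B : Defs.rgraph) : rg_n A = 0 -> rg_n B = 0 -> shi_le A B.
Proof.
move=> A0 B0.
have noA (x : 'I_(rg_n A)) : False by have := leq_trans (ltn_ord x) (eq_leq A0).
have noB (y : 'I_(rg_n B)) : False by have := leq_trans (ltn_ord y) (eq_leq B0).
exists (fun y => match noB y with end); split; last by move=> x; case: (noA x).
by split=> y; case: (noB y).
Qed.

Lemma shi_lt_size (A B : Defs.rgraph) : shi_lt A B -> rg_n A < rg_n B.
Proof.
move=> [[f [[f_hom f_strong] f_onto]] not_le].
have [g fgK] : exists g, cancel g f := fin_all_exists f_onto.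
have g_inj := can_inj fgK.
have := leq_card g g_inj; rewrite !card_ord leq_eqVlt => /orP [/eqP eq_n|//].
have [f' _ f'K] : bijective g by apply: inj_card_bij g_inj _; rewrite !card_ord eq_n.
have gfK : cancel f g by move=> x; rewrite -[x]f'K fgK.
case: not_le; exists g; split; last by move=> x; exists (f x).
split=> a b e_ab; last by exists a, b; split=> //; have := f_hom _ _ e_ab; rewrite !fgK.
have := f_strong (g a) (g b); rewrite !fgK => /(_ e_ab) [x [y [fx fy e_xy]]].
by rewrite -(congr1 g fx) -(congr1 g fy) !gfK.
Qed.

Lemma no_infinite_descent (G : nat -> Defs.rgraph) :
  ~ (forall i, shi_lt (G i.+1) (G i)).
Proof.
move=> desc; have size_drop i : rg_n (G i) + i <= rg_n (G 0).
  by elim: i => [|i IHi]; [rewrite addn0 | have := shi_lt_size (desc i); lia].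
by have := size_drop (rg_n (G 0)).+1; lia.
Qed.

Lemma antichain_nonempty_tail (G : nat -> Defs.rgraph) :
    (forall i j, i <> j -> ~ shi_le (G i) (G j)) ->
  exists m, forall i, 0 < rg_n (G (i + m)).
Proof.
move=> antiG; case: (classic (exists k, rg_n (G k) = 0)) => [[k Gk0]|]; last first.
  by move/not_ex_all_not => nonempty; exists 0 => i; rewrite lt0n; apply/eqP.
exists k.+1 => i; rewrite lt0n; apply/eqP => Gi0.
by apply: (antiG k (i + k.+1)); [lia | exact: shi_le_empty].
Qed.

Definition vertex_cover (T : finType) (e : rel T) (S : {pred T}) :=
  forall x y, x \notin S -> y \notin S -> x != y -> ~~ e x y.

Definition matching (T : eqType) (e : rel T) (x0 : T) (k : nat) (l : seq T) :=
  [/\ uniq l, size l = k.*2 &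
      forall i, i < k -> e (nth x0 l i.*2) (nth x0 l i.*2.+1)].

Lemma vertex_cover_or_matching (T : finType) (e : rel T) (x0 : T) (k : nat) :
  (exists S : {set T}, #|S| <= k.*2 /\ vertex_cover e S) \/
  exists l, matching e x0 k l.
Proof.
elim: k => [|k [[S [S_le S_cover]]|[l [l_uniq l_size l_edge]]]].
- by right; exists [::].
- by left; exists S; split=> //; rewrite (leq_trans S_le) // leq_double.
case: (boolP [exists x, exists y, [&& x \notin l, y \notin l, x != y & e x y]]).
  case/existsP => x /existsP [y /and4P [xl yl neq_xy e_xy]].
  right; exists [:: x, y & l]; split.
  - by rewrite /= in_cons negb_or neq_xy xl yl l_uniq.
  - by rewrite /= l_size doubleS.
  - by case=> [|i] //; rewrite ltnS doubleS /=; exact: l_edge.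
move=> no_free_edge; left; exists [set x in l]; split.
  by rewrite cardsE (card_uniqP l_uniq) l_size leq_double.
move=> x y; rewrite !inE => xl yl neq_xy; apply: contra no_free_edge => e_xy.
by apply/existsP; exists x; apply/existsP; exists y; rewrite xl yl neq_xy.
Qed.

Lemma K_le_of_matching (n : nat) (H : Defs.rgraph) (x0 : 'I_(rg_n H))
    (l : seq 'I_(rg_n H)) :
  0 < n -> matching (@rg_e H) x0 (n * n) l -> shi_le (K n) H.
Proof.
case: n => // n _ [l_uniq l_size l_edge]; set m := n.+1 in l_size l_edge *.
pose f (x : 'I_(rg_n H)) : 'I_m :=
  let i := index x l in
  inord (if odd i then i./2 %% m else i./2 %/ m).
have f_even j : j < m * m -> f (nth x0 l j.*2) = inord (j %/ m).
  move=> lt_j; rewrite /f index_uniq //; last by rewrite l_size ltn_double.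
  by rewrite odd_double doubleK.
have f_odd j : j < m * m -> f (nth x0 l j.*2.+1) = inord (j %% m).
  move=> lt_j; rewrite /f index_uniq //; last by rewrite l_size -doubleS leq_double.
  by rewrite /= odd_double uphalf_double.
have lt_pair (a b : 'I_m) : a * m + b < m * m.
  by have := ltn_ord a; have := ltn_ord b; nia.
have pair_div (a b : 'I_m) : (a * m + b) %/ m = a.
  by rewrite divnMDl // divn_small // addn0.
have pair_mod (a b : 'I_m) : (a * m + b) %% m = b.
  by rewrite modnMDl modn_small.
exists f; split; last first.
  by move=> a; exists (nth x0 l (a * m + a).*2); rewrite f_even // pair_div inord_val.
split=> // x y _.
exists (nth x0 l (f x * m + f y).*2), (nth x0 l (f x * m + f y).*2.+1).
by rewrite f_even // f_odd // pair_div pair_mod !inord_val; split=> //; apply: l_edge.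
Qed.

Lemma Av_K_vertex_cover (n : nat) (H : Defs.rgraph) (x0 : 'I_(rg_n H)) :
    0 < n -> Av (K n) H ->
  exists S : {set 'I_(rg_n H)}, #|S| <= (n * n).*2 /\ vertex_cover (@rg_e H) S.
Proof.
move=> n_gt0 avH.
have [//|[l l_matching]] := vertex_cover_or_matching (@rg_e H) x0 (n * n).
by case: avH; exact: K_le_of_matching n_gt0 l_matching.
Qed.

Lemma labelled_vertex_cover (T : finType) (e : rel T) (x0 : T) (S : {set T})
    (c : nat) :
  #|S| <= c -> vertex_cover e S -> exists cv : 'I_c -> T, vertex_cover e [in codom cv].
Proof.
move=> S_le S_cover; exists (fun i => nth x0 (enum S) i).
have S_sub x : x \in S -> x \in codom (fun i : 'I_c => nth x0 (enum S) i).
  move=> xS; have lt_x : index x (enum S) < c.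
    by apply: leq_trans S_le; rewrite cardE index_mem mem_enum.
  by apply/codomP; exists (Ordinal lt_x); rewrite /= nth_index ?mem_enum.
move=> x y x_out y_out; apply: S_cover.
  by apply: contra x_out; exact: S_sub.
by apply: contra y_out; exact: S_sub.
Qed.

Lemma exists_onto (T1 T2 : finType) (x0 : T1) (A : {set T1}) (B : {set T2}) :
    #|A| <= #|B| -> (A == set0) = (B == set0) ->
  exists h : T2 -> T1, {in B, forall y, h y \in A} /\
    {in A, forall x, exists2 y, y \in B & h y = x}.
Proof.
move=> le_AB eq0_AB; have [A0|[a aA]] := set_0Vmem A.
  move: eq0_AB; rewrite A0 eqxx => /esym/eqP B0.
  by exists (fun=> x0); split=> y; rewrite ?B0 inE.
have [b bB] : exists b, b \in B by apply/set0Pn; rewrite -eq0_AB; apply/set0Pn; exists a.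
have A_gt0 : 0 < #|A| by apply/card_gt0P; exists a.
pose h y := nth a (enum A) (minn (index y (enum B)) #|A|.-1).
exists h; split=> [y _|x xA].
  by rewrite -mem_enum mem_nth // -cardE; lia.
have lt_xA : index x (enum A) < #|A| by rewrite cardE index_mem mem_enum.
exists (nth b (enum B) (index x (enum A))).
  by rewrite -mem_enum mem_nth // -cardE; lia.
rewrite /h index_uniq ?enum_uniq -?cardE ?(leq_trans lt_xA le_AB) //.
have -> : minn (index x (enum A)) #|A|.-1 = index x (enum A) by lia.
by rewrite nth_index ?mem_enum.
Qed.

Section LabelledCover.
Variables (c : nat) (H : Defs.rgraph) (cv : 'I_c -> 'I_(rg_n H)).

Definition label_type (v : 'I_(rg_n H)) : {set 'I_c} := [set i | rg_e (cv i) v].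

Definition outer_class (T : {set 'I_c}) : {set 'I_(rg_n H)} :=
  [set v | (v \notin codom cv) && (label_type v == T)].

Definition label_shape : {ffun 'I_c * 'I_c -> bool * bool} * {set {set 'I_c}} :=
  ([ffun ij => (rg_e (cv ij.1) (cv ij.2), cv ij.1 == cv ij.2)],
   [set T | outer_class T != set0]).

End LabelledCover.

Section Collapse.
Variables (c : nat) (H H' : Defs.rgraph).
Variables (cv : 'I_c -> 'I_(rg_n H)) (cv' : 'I_c -> 'I_(rg_n H')).
Hypothesis cover : vertex_cover (@rg_e H) [in codom cv].
Hypothesis cover' : vertex_cover (@rg_e H') [in codom cv'].
Hypothesis label_edge : forall i j, rg_e (cv i) (cv j) = rg_e (cv' i) (cv' j).
Hypothesis label_eq : forall i j, (cv i == cv j) = (cv' i == cv' j).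
Variable h : {set 'I_c} -> 'I_(rg_n H') -> 'I_(rg_n H).
Hypothesis h_in :
  forall T, {in outer_class cv' T, forall y, h T y \in outer_class cv T}.
Hypothesis h_onto : forall T,
  {in outer_class cv T, forall x, exists2 y, y \in outer_class cv' T & h T y = x}.

Definition collapse (y : 'I_(rg_n H')) : 'I_(rg_n H) :=
  if [pick i | cv' i == y] is Some i then cv i else h (label_type cv' y) y.

Lemma collapse_label i : collapse (cv' i) = cv i.
Proof.
rewrite /collapse; case: pickP => [j /eqP eq_j|/(_ i)]; last by rewrite eqxx.
by apply/eqP; rewrite label_eq eq_j.
Qed.

Lemma collapse_outer y :
  y \notin codom cv' -> collapse y \in outer_class cv (label_type cv' y).
Proof.
move=> y_out; rewrite /collapse; case: pickP => [i /eqP eq_i|_].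
  by case/codomP: y_out; exists i.
by apply: h_in; rewrite inE y_out eqxx.
Qed.

Lemma collapse_edge x y : (x \in codom cv') || (y \in codom cv') ->
  rg_e (collapse x) (collapse y) = rg_e x y.
Proof.
wlog /codomP [i ->] : x y / x \in codom cv'.
  move=> labelled /orP [/labelled -> //|y_lab].
  by rewrite rg_sym [rg_e x y]rg_sym labelled ?y_lab.
rewrite collapse_label; have [/codomP [j ->]|y_out] := boolP (y \in codom cv').
  by rewrite collapse_label label_edge.
have := collapse_outer y_out; rewrite inE => /andP [_ /eqP /setP /(_ i)].
by rewrite !inE.
Qed.

Lemma collapse_hom : is_hom collapse.
Proof.
move=> x y e_xy.
have [/collapse_edge -> //|] := boolP ((x \in codom cv') || (y \in codom cv')).
rewrite negb_or => /andP [x_out y_out].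
have [<-|neq_xy] := eqVneq x y; first exact: rg_refl.
by move: (cover' x_out y_out neq_xy); rewrite e_xy.
Qed.

Lemma collapse_strong x y : rg_e (collapse x) (collapse y) ->
  exists x' y', [/\ collapse x' = collapse x, collapse y' = collapse y & rg_e x' y'].
Proof.
have [/collapse_edge e_f e_fxy|] := boolP ((x \in codom cv') || (y \in codom cv')).
  by exists x, y; rewrite -e_f.
rewrite negb_or => /andP [x_out y_out] e_fxy.
have [eq_f|neq_f] := eqVneq (collapse x) (collapse y).
  by exists x, x; split=> //; apply: rg_refl.
have := collapse_outer x_out; have := collapse_outer y_out; rewrite !inE.
move=> /andP [fy_out _] /andP [fx_out _].
by move: (cover fx_out fy_out neq_f); rewrite e_fxy.
Qed.

Lemma collapse_onto x : exists y, collapse y = x.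
Proof.
have [/codomP [i ->]|x_out] := boolP (x \in codom cv).
  by exists (cv' i); rewrite collapse_label.
have x_in : x \in outer_class cv (label_type cv x) by rewrite inE x_out eqxx.
have [y y_out <-] := h_onto x_in.
move: (y_out); rewrite inE => /andP [y_lab /eqP <-].
exists y; rewrite /collapse; case: pickP => [i /eqP eq_i|//].
by case/codomP: y_lab; exists i.
Qed.

Lemma shi_le_collapse : shi_le H H'.
Proof.
exists collapse; split; last exact: collapse_onto.
by split; [exact: collapse_hom | exact: collapse_strong].
Qed.

End Collapse.

Lemma shi_le_of_label_shape (c : nat) (H H' : Defs.rgraph)
    (cv : 'I_c -> 'I_(rg_n H)) (cv' : 'I_c -> 'I_(rg_n H')) :
    0 < c -> vertex_cover (@rg_e H) [in codom cv] ->
    vertex_cover (@rg_e H') [in codom cv'] ->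
    label_shape cv = label_shape cv' ->
    (forall T, #|outer_class cv T| <= #|outer_class cv' T|) ->
  shi_le H H'.
Proof.
move=> c_gt0 cover cover' [/ffunP same_labels /setP same_support] le_outer.
have label_edge i j : rg_e (cv i) (cv j) = rg_e (cv' i) (cv' j).
  by have := same_labels (i, j); rewrite !ffunE => -[].
have label_eq i j : (cv i == cv j) = (cv' i == cv' j).
  by have := same_labels (i, j); rewrite !ffunE => -[].
have /fin_all_exists [h h_onto] T : exists hT : 'I_(rg_n H') -> 'I_(rg_n H),
    {in outer_class cv' T, forall y, hT y \in outer_class cv T} /\
    {in outer_class cv T, forall x, exists2 y, y \in outer_class cv' T & hT y = x}.
  apply: (exists_onto (cv (Ordinal c_gt0)) (le_outer T)).
  by apply: negb_inj; have := same_support T; rewrite !inE.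
exact: (shi_le_collapse cover cover' label_edge label_eq
  (fun T => (h_onto T).1) (fun T => (h_onto T).2)).
Qed.

Theorem theorem3p6 (n : nat) (hn : 1 <= n) : wqo_on (Av (K n)).
Proof.
split; first by case=> G [_]; exact: no_infinite_descent.
case=> G [avG antiG]; have [m G_gt0] := antichain_nonempty_tail antiG.
pose c := (n * n).*2; have c_gt0 : 0 < c by rewrite double_gt0 muln_gt0 hn.
have cover i : exists cv : 'I_c -> 'I_(rg_n (G (i + m))),
    vertex_cover (@rg_e _) [in codom cv].
  have x0 := Ordinal (G_gt0 i).
  have [S [S_le S_cover]] := Av_K_vertex_cover x0 hn (avG (i + m)).
  exact: (labelled_vertex_cover (c := c) x0 S_le S_cover).
pose cvs i := proj1_sig (constructive_indefinite_description _ (cover i)).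
have cvs_cover i : vertex_cover (@rg_e _) [in codom (cvs i)].
  exact: proj2_sig (constructive_indefinite_description _ (cover i)).
pose s i := existT (fun H => 'I_c -> 'I_(rg_n H)) (G (i + m)) (cvs i).
have [i [j [lt_ij same_shape le_outer]]] := dickson_coloured
  (fun x => label_shape (projT2 x)) (fun x T => #|outer_class (projT2 x) T|) s.
apply: (antiG (i + m) (j + m)); first lia.
exact: shi_le_of_label_shape c_gt0 (cvs_cover i) (cvs_cover j) same_shape le_outer.
Qed.
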